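(* Let $n\geq 3$ and let $C_n^*$ be the complex described in the context. Let $D$ be an $S^3$-knotlike chain complex over $R$, and let $f\colon C_n^*\to D$ and $g\colon D\to C_n^*$ be $R$-linear chain maps. Then the image of $g f(\alpha_n^* )$ is a boundary in the complex $C_n^*\otimes_R\mathbb{F}[\mathcal{U}]/(\mathcal{U}^{n-1})$, where $\mathcal{V}$ acts on $\mathbb{F}[\mathcal{U}]/(\mathcal{U}^{n-1})$ as $1$.
   Context: Let $\mathbb{F}=\mathbb{Z}/2$ and $R=\mathbb{F}[\mathcal{U},\mathcal{V}]$. A chain complex $D$ over $R$ is $S^3$-knotlike if $H_*(D\otimes_R\mathbb{F}[\mathcal{U}])\cong\mathbb{F}[\mathcal{U}]$ as $\mathbb{F}[\mathcal{U}]$-modules, where $\mathcal{V}$ acts on $\mathbb{F}[\mathcal{U}]$ as $1$. For $n\geq 3$, $C_n^*$ is the free $R$-module with basis $\alpha^*_s$ ($1\leq s\leq 2n-1$); $\widetilde{\alpha}^*_s$ ($1\leq s\leq n-2$ and $n+1\leq s\leq 2n-2$); $b^{*,(s)}_{n-1}$ ($1\leq s\leq n-2$); $b^{*,(s)}_{n}$ ($1\leq s\leq 2n-2$); $b^{*,(s)}_{n+1}$ ($n+1\leq s\leq 2n-2$), with $R$-linear differential $\partial$ given by $\partial\alpha^*_s=0$, $\partial\widetilde{\alpha}^*_s=0$, and $\partial b^{*,(s)}_{n-1}=\mathcal{U}^{n(n-1)/2}\mathcal{V}^{n(n-1)/2}\alpha^*_s+\mathcal{V}^{n-s-1}\widetilde{\alpha}^*_s$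 for $1\leq s\leq n-2$; $\partial b^{*,(s)}_{n}=\mathcal{U}^{n(n+1)/2-s}\mathcal{V}^{n(n+1)/2}\alpha^*_{s+1}+\mathcal{U}^{n}\widetilde{\alpha}^*_s$ for $1\leq s\leq n-2$; $\partial b^{*,(s)}_{n}=\mathcal{U}^{n(n+1)/2}\mathcal{V}^{n(n-1)/2-n+s+1}\alpha^*_s+\mathcal{U}^{n(n+1)/2-s}\mathcal{V}^{n(n+1)/2}\alpha^*_{s+1}$ for $n-1\leq s\leq n$; $\partial b^{*,(s)}_{n}=\mathcal{U}^{n(n+1)/2}\mathcal{V}^{n(n-1)/2-n+s+1}\alpha^*_s+\mathcal{V}^{n}\widetilde{\alpha}^*_s$ for $n+1\leq s\leq 2n-2$; $\partial b^{*,(s)}_{n+1}=\mathcal{U}^{n(n-1)/2}\mathcal{V}^{n(n-1)/2}\alpha^*_{s+1}+\mathcal{U}^{s-n}\widetilde{\alpha}^*_s$ for $n+1\leq s\leq 2n-2$. *)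

From HB Require Import structures.
From mathcomp Require Import all_boot all_order all_algebra.
Unset Printing Implicit Defensive.
Import GRing.Theory.
Local Open Scope ring_scope.

(** The ring R = F[U,V], F = Z/2, realised as {poly {poly 'F_2}}:
    the inner variable is U, the outer variable is V. *)
Definition R : comNzRingType := {poly {poly 'F_2}}.
Definition Uv : R := ('X : {poly 'F_2})%:P.
Definition Vv : R := 'X.
(** F[U] = {poly 'F_2}; the action of R on F[U] where V acts as 1 is
    r . p = r.[1] * p  (evaluation of the outer variable V at 1). *)
Definition setV1 (r : R) : {poly 'F_2} := r.[1].

Section Cx.
Variable (D : lmodType R) (dD : D -> D).

(** x is a cycle in D (x)_R F[U]  =  D/(V-1)D *)
Definition cycV1 (x : D) : Prop := exists y : D, dD x = (Vv - 1) *: y.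
(** x is a boundary in D (x)_R F[U] *)
Definition bndV1 (x : D) : Prop := exists y z : D, x = dD y + (Vv - 1) *: z.

(** D is S^3-knotlike: H_*(D (x)_R F[U]) ~= F[U] as F[U]-modules.
    Spelled out: a map phi : F[U] -> (cycles of D (x)_R F[U]) whose
    induced map F[U] -> H_* is R-linear (V acting as 1 on F[U]),
    injective and surjective. *)
Definition S3_knotlike : Prop :=
  exists phi : {poly 'F_2} -> D,
    [/\ forall p, cycV1 (phi p),
        forall (r : R) p q,
          bndV1 (phi (setV1 r * p + q) - (r *: phi p + phi q)),
        forall p, bndV1 (phi p) -> p = 0
      & forall x, cycV1 x -> exists p, bndV1 (x - phi p)].
End Cx.

Inductive gkind := KA | KAt | KB1 | KB2 | KB3.
(* KA = alpha^*_s, KAt = tilde-alpha^*_s, KB1 = b^{*,(s)}_{n-1},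
   KB2 = b^{*,(s)}_n, KB3 = b^{*,(s)}_{n+1} *)

Definition gkind_code (k : gkind) : 'I_5 :=
  match k with KA => inord 0 | KAt => inord 1 | KB1 => inord 2
             | KB2 => inord 3 | KB3 => inord 4 end.
Definition gkind_decode (i : 'I_5) : gkind :=
  match val i with 0 => KA | 1 => KAt | 2 => KB1 | 3 => KB2 | _ => KB3 end.
Lemma gkind_codeK : cancel gkind_code gkind_decode.
Proof. by case; rewrite /gkind_decode /= inordK. Qed.
HB.instance Definition _ := Finite.copy gkind (can_type gkind_codeK).

Definition gvalid (n : nat) (x : gkind * 'I_(2 * n)) : bool :=
  let s := nat_of_ord x.2 in
  match x.1 with
  | KA  => (1 <= s <= 2 * n - 1)%N
  | KAt => (1 <= s <= n - 2)%N || (n + 1 <= s <= 2 * n - 2)%N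
  | KB1 => (1 <= s <= n - 2)%N
  | KB2 => (1 <= s <= 2 * n - 2)%N
  | KB3 => (n + 1 <= s <= 2 * n - 2)%N
  end.

Definition gen (n : nat) : finType := {x : gkind * 'I_(2 * n) | gvalid n x}.

Definition Cn (n : nat) : lmodType R := {ffun gen n -> R^o}.

(** the basis vector with label (k, s) (zero if (k, s) is not a label) *)
Definition gvec (n : nat) (k : gkind) (s : nat) : Cn n :=
  [ffun h : gen n => (((val h).1 == k) && (nat_of_ord (val h).2 == s))%:R].

Definition alphaS n s := gvec n KA s.
Definition alphaT n s := gvec n KAt s.

Definition mono (a b : nat) : R := Uv ^+ a * Vv ^+ b.

Definition T2 (n : nat) : nat := (n * (n - 1)) %/ 2.
Definition T2' (n : nat) : nat := (n * (n + 1)) %/ 2.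

Definition dgen (n : nat) (g : gen n) : Cn n :=
  let s := nat_of_ord (val g).2 in
  match (val g).1 with
  | KA | KAt => 0
  | KB1 => mono (T2 n) (T2 n) *: alphaS n s + mono 0 (n - s - 1) *: alphaT n s
  | KB2 =>
      if (s <= n - 2)%N then
        mono (T2' n - s) (T2' n) *: alphaS n s.+1 + mono n 0 *: alphaT n s
      else if (s <= n)%N then
        mono (T2' n) (T2 n - n + s + 1) *: alphaS n s
          + mono (T2' n - s) (T2' n) *: alphaS n s.+1
      else
        mono (T2' n) (T2 n - n + s + 1) *: alphaS n s + mono 0 n *: alphaT n s
  | KB3 => mono (T2 n) (T2 n) *: alphaS n s.+1 + mono (s - n) 0 *: alphaT n s
  end.

Definition dC (n : nat) (c : Cn n) : Cn n := \sum_(g : gen n) c g *: dgen n g.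

(** x is a boundary in C_n^* (x)_R F[U]/(U^(n-1)), V acting as 1:
    x - dC y lies in (V - 1, U^(n-1)) C_n^*. *)
Definition bnd_trunc (n : nat) (x : Cn n) : Prop :=
  exists y z w : Cn n, x = dC n y + (Vv - 1) *: z + Uv ^+ (n - 1) *: w.

From HB Require Import structures.
From mathcomp Require Import all_boot all_order all_algebra.
From mathcomp Require Import zify.
Import GRing.Theory.
Local Open Scope ring_scope.

(* Write a := f alpha_(n-1), a' := f alpha_n and k := n(n+1)/2 - (n-1).  Setting
   V = 1 in the boundary of b^{*,(n-1)}_n shows that U^(k+n-1) a + U^k a' is a
   boundary of D (x) F[U]; in characteristic 2 this is U^k times the cycle
   a' - U^(n-1) a.  As H_*(D (x) F[U]) = F[U] has no U-torsion, a' - U^(n-1) a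
   is itself a boundary, and applying the chain map g shows that g a' is a
   boundary modulo U^(n-1). *)

Lemma pchar2_polyF2 : 2 \in [pchar {poly 'F_2}].
Proof. by rewrite pchar_poly pchar_Fp. Qed.

Lemma setV1N c : setV1 (- c) = - setV1 c.
Proof. exact: hornerN. Qed.

Lemma setV1B c d : setV1 (c - d) = setV1 c - setV1 d.
Proof. by rewrite /setV1 hornerD hornerN. Qed.

Lemma setV1_mono a b : setV1 (mono a b) = 'X^a.
Proof.
by rewrite /setV1 /mono /Uv /Vv hornerM -rmorphXn hornerC hornerXn expr1n mulr1.
Qed.

Lemma setV1_Uv_exp a : setV1 (Uv ^+ a) = 'X^a.
Proof. by rewrite -(setV1_mono a 0) /mono expr0 mulr1. Qed.

Section BoundariesModV1.
Variables (D : lmodType R) (dD : {linear D -> D}).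
Local Notation bnd := (bndV1 D dD).
Local Notation cyc := (cycV1 D dD).

Lemma bndV1D x y : bnd x -> bnd y -> bnd (x + y).
Proof.
move=> [y1 [z1 ->]] [y2 [z2 ->]]; exists (y1 + y2), (z1 + z2).
by rewrite linearD scalerDr addrACA.
Qed.

Lemma bndV1N x : bnd x -> bnd (- x).
Proof.
move=> [y [z ->]]; exists (- y), (- z).
by rewrite linearN scalerN opprD.
Qed.

Lemma bndV1B x y : bnd x -> bnd y -> bnd (x - y).
Proof. by move=> bx /bndV1N; apply: bndV1D. Qed.

Lemma bndV1Z r x : bnd x -> bnd (r *: x).
Proof.
move=> [y [z ->]]; exists (r *: y), (r *: z).
by rewrite linearZ scalerDr !scalerA mulrC.
Qed.

Lemma bndV1_d y : bnd (dD y).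
Proof. by exists y, 0; rewrite scaler0 addr0. Qed.

Lemma bndV1_setV1_eq0 c v : setV1 c = 0 -> bnd (c *: v).
Proof.
move=> /eqP c1; have /factor_theorem [q ->] : root c 1 by [].
exists 0, (q *: v).
by rewrite linear0 add0r scalerA mulrC /Vv polyC1.
Qed.

Lemma bndV1_setV1_coef {c d : R} {u x : D} :
  setV1 c = setV1 d -> bnd (c *: u + x) -> bnd (d *: u + x).
Proof.
move=> e bc; have -> : d *: u + x = (c *: u + x) + (d - c) *: u.
  by rewrite scalerBl addrAC addrCA subrr addr0.
apply: bndV1D => //; apply: bndV1_setV1_eq0.
by rewrite setV1B e subrr.
Qed.

Lemma bndV1_comb2_setV1 c1 c2 d1 d2 u v :
  setV1 c1 = setV1 d1 -> setV1 c2 = setV1 d2 ->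
  bnd (c1 *: u + c2 *: v) -> bnd (d1 *: u + d2 *: v).
Proof.
move=> e1 e2 /(bndV1_setV1_coef e1); rewrite addrC => /(bndV1_setV1_coef e2).
by rewrite addrC.
Qed.

Lemma cycV1_d0 x : dD x = 0 -> cyc x.
Proof. by exists 0; rewrite scaler0. Qed.

Lemma S3_knotlike_bndV1_expU_cancel {k : nat} {x : D} :
  S3_knotlike D dD -> cyc x -> bnd (Uv ^+ k *: x) -> bnd x.
Proof.
move=> [phi [_ phi_lin phi_inj phi_onto]] cx bUx.
have [p bx] := phi_onto x cx.
have bphi0 : bnd (phi 0).
  have := phi_lin 1 0 0; rewrite mulr0 addr0 scale1r opprD addrA subrr add0r.
  by move/bndV1N; rewrite opprK.
have bUphi : bnd (Uv ^+ k *: phi p).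
  by rewrite -[phi p](subKr x) scalerBr; apply: bndV1B => //; apply: bndV1Z.
have bphiXp : bnd (phi ('X^k * p)).
  have := phi_lin (Uv ^+ k) p 0; rewrite setV1_Uv_exp addr0 => blin.
  by rewrite -[phi _](subrK (Uv ^+ k *: phi p + phi 0)); apply: bndV1D => //;
    apply: bndV1D.
have p0 : p = 0.
  by have /eqP := phi_inj _ bphiXp; rewrite mulf_eq0 expf_eq0 polyX_eq0 andbF => /eqP.
by rewrite -[x](subrK (phi p)); apply: bndV1D; rewrite // p0.
Qed.

End BoundariesModV1.

Lemma dC_gvec n (h : gen n) : dC n (gvec n (val h).1 (val h).2) = dgen n h.
Proof.
rewrite /dC (bigD1 h) //= big1 ?addr0; first by rewrite ffunE !eqxx scale1r.
move=> h' h'h; rewrite ffunE.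
case: eqP => [e1|]; last by rewrite scale0r.
case: eqP => [e2|]; last by rewrite scale0r.
case/eqP: h'h; apply: val_inj.
rewrite [val h']surjective_pairing [val h]surjective_pairing e1.
by congr pair; apply: val_inj.
Qed.

Lemma dC_alphaS n s : dC n (alphaS n s) = 0.
Proof.
rewrite /dC big1 // => h _; rewrite ffunE.
case: eqP => [e1|]; last by rewrite scale0r.
by rewrite /dgen e1 scaler0.
Qed.

Lemma leq_T2 n : (3 <= n)%N -> (n <= T2 n)%N.
Proof. by move=> n3; rewrite /T2 leq_divRL //; nia. Qed.

Lemma leq_pred_T2' n : (n - 1 <= T2' n)%N.
Proof. by rewrite /T2' leq_divRL //; nia. Qed.

Lemma dC_bn_pred n : (3 <= n)%N ->
  dC n (gvec n KB2 (n - 1)) =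
    mono (T2' n) (T2 n) *: alphaS n (n - 1)
    + mono (T2' n - (n - 1)) (T2' n) *: alphaS n n.
Proof.
move=> n3; have lt_n2n : (n - 1 < 2 * n)%N by lia.
have valid : gvalid n (KB2, Ordinal lt_n2n) by rewrite /gvalid /=; lia.
pose b : gen n := exist _ (KB2, Ordinal lt_n2n) valid.
rewrite (dC_gvec n b) /dgen /=.
have -> : (n - 1 <= n - 2)%N = false by lia.
have -> : (n - 1 <= n)%N = true by lia.
have -> : (n - 1).+1 = n by lia.
by have -> : (T2 n - n + (n - 1) + 1)%N = T2 n by have := leq_T2 n n3; lia.
Qed.

Lemma bnd_trunc_chain n (D : lmodType R) (dD : D -> D) (g : {linear D -> Cn n})
    x w :
  (forall y, g (dD y) = dC n (g y)) ->
  bndV1 D dD x -> bnd_trunc n (g x + Uv ^+ (n - 1) *: w).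
Proof.
move=> hg [y [z ->]]; exists (g y), (g z), w.
by rewrite linearD linearZ hg.
Qed.

Theorem lemma2p11 (n : nat) (hn : (3 <= n)%N)
  (D : lmodType R) (dD : {linear D -> D})
  (hdD : forall x : D, dD (dD x) = 0)
  (hknot : S3_knotlike D dD)
  (f : {linear Cn n -> D}) (g : {linear D -> Cn n})
  (hf : forall c : Cn n, f (dC n c) = dD (f c))
  (hg : forall x : D, g (dD x) = dC n (g x)) :
  bnd_trunc n (g (f (alphaS n n))).
Proof.
set a := f (alphaS n (n - 1)); set a' := f (alphaS n n).
have f_alpha_cycle s : dD (f (alphaS n s)) = 0 by rewrite -hf dC_alphaS linear0.
have cyc_x : cycV1 D dD (a' - Uv ^+ (n - 1) *: a).
  by apply: cycV1_d0; rewrite linearB linearZ /= !f_alpha_cycle scaler0 subrr.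
have bnd_Ukx : bndV1 D dD (Uv ^+ (T2' n - (n - 1)) *: (a' - Uv ^+ (n - 1) *: a)).
  have bnd_fb := bndV1_d D dD (f (gvec n KB2 (n - 1))).
  rewrite -hf dC_bn_pred // linearD !linearZ in bnd_fb.
  rewrite scalerBr scalerA -exprD subnK ?leq_pred_T2' // -scaleNr addrC.
  apply: bndV1_comb2_setV1 bnd_fb; rewrite ?setV1_mono ?setV1_Uv_exp //.
  by rewrite setV1N setV1_Uv_exp oppr_pchar2 // pchar2_polyF2.
have bnd_x := S3_knotlike_bndV1_expU_cancel D dD hknot cyc_x bnd_Ukx.
rewrite -[a'](subrK (Uv ^+ (n - 1) *: a)) linearD [g (_ *: _)]linearZ.
exact: bnd_trunc_chain hg bnd_x.
Qed.
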